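(* Let $f=\prod_{i=1}^n(y-a_i)\in\overline K[y]$ be reduced ($a_i$ pairwise distinct, $n\ge2$) with $\nu(a_i)>0$ for all $i$. The complete magic matrix $\mathcal A$ induces an automorphism $\mathcal A_{|\overline{\mathcal F}}$ of $\overline{\mathcal F}$. Moreover, the inverse $(\mathcal A_{|\overline{\mathcal F}})^{-1}$ has graded degree $+1$ and its graded map is $(A_{|F})^{-1}$: for every $r\in\mathbf Q$ and $w\in\overline{\mathcal F}_r$, $(\mathcal A_{|\overline{\mathcal F}})^{-1}w\in\overline{\mathcal F}_{r+1}$ and $\mathrm{in}_{r+1}\bigl((\mathcal A_{|\overline{\mathcal F}})^{-1}w\bigr)=(A_{|F})^{-1}\,\mathrm{in}_r(w)$.
   Context: $\overline K=\bigcup_{d\ge1}\mathbf C[[x^{1/d}]][1/x]$ with valuation $\nu$, $'$ denotes $d/dx$. $\overline{\mathcal E}$ is the $\overline K$-space of polynomials in $y$ of degree $<n$, with basis $\varepsilon_i=\prod_{j\ne i}(y-a_j)$; $\overline{\mathcal F}=\{\sum u_i\varepsilon_i:\sum u_i=0\}$ (the polynomials of degree $<n-1$). $\mathrm{val}(\sum w_i\varepsilon_i)=\inf_i\nu(w_i)$; $\overline{\mathcal F}_r=\{w\in\overline{\mathcal F}:\mathrm{val}(w)\ge r\}$; $\mathrm{in}_r(w)\in\mathbf C^n$ is the vector of coefficients of $x^r$ in the $w_i$. $\mathcal A$ is the symmetric matrix over $\overline K$ with off-diagonal entries $-(a'_i-a'_j)/(a_i-a_j)$ and diagonal entries $\sum_{j\ne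 i}(a'_i-a'_j)/(a_i-a_j)$, acting on coordinates in the basis $(\varepsilon_i)$. $A$ is the rational matrix with entries $-m_{i,j}$ off the diagonal and $m_i=\sum_{j\ne i}m_{i,j}$ on the diagonal, where $m_{i,j}=\nu(a_i-a_j)$; $F=\{W\in\mathbf C^n:\sum W_i=0\}$ and $A_{|F}$ is the restriction of $A$ to $F$ (which is invertible). *)

From mathcomp Require Import all_boot all_order all_algebra.
From mathcomp Require Import complex.
From mathcomp Require Import all_classical all_reals.
Set Implicit Arguments. Unset Strict Implicit. Unset Printing Implicit Defensive.
Import Order.TTheory GRing.Theory Num.Theory.
Local Open Scope classical_set_scope.
Local Open Scope ring_scope.

(* Puiseux series over C = R[i] (R a realType), represented by their
   coefficient functions  q |-> coefficient of x^q,  q : rat.            *)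
Section Puiseux.
Variable R : realType.
Local Notation C := R[i].

Definition ser := rat -> C.

(* f is an element of  \bigcup_d C[[x^{1/d}]][1/x] : exponents in (1/d)Z,
   bounded below. *)
Definition is_puiseux (f : ser) : Prop :=
  exists (d : nat) (m : int), (0 < d)%N /\
    forall q : rat, f q != 0 -> (q * d%:R \is a Num.int) /\ (m%:~R <= q).

Definition psub (f g : ser) : ser := fun q => f q - g q.

(* Cauchy product (the sum has finite support for Puiseux series). *)
Definition pmul (f g : ser) : ser :=
  fun q => \sum_(s \in [set: rat]) f s * g (q - s).

Definition pdiv (f g : ser) : ser :=
  xget (fun _ => 0) [set h | is_puiseux h /\ pmul g h = f].

Definition pder (f : ser) : ser := fun q => ratr (q + 1) * f (q + 1).

Definition nu_ge (f : ser) (r : rat) : Prop := forall q, q < r -> f q = 0.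
Definition nu_gt (f : ser) (r : rat) : Prop := forall q, q <= r -> f q = 0.
Definition nu (f : ser) : rat := xget 0 [set r | f r != 0 /\ nu_ge f r].

Variable n : nat.
Variable a : 'I_n -> ser.

Definition magic_off (i j : 'I_n) : ser :=
  pdiv (psub (pder (a i)) (pder (a j))) (psub (a i) (a j)).
Definition magic (i j : 'I_n) : ser :=
  if i == j then (fun q => \sum_(k | k != i) magic_off i k q)
  else (fun q => - magic_off i j q).

(* action of \mathcal A on coordinates in the basis (eps_i) *)
Definition magic_app (u : 'I_n -> ser) : 'I_n -> ser :=
  fun i q => \sum_j pmul (magic i j) (u j) q.

Definition in_Fbar (u : 'I_n -> ser) : Prop :=
  (forall i, is_puiseux (u i)) /\ (forall q, \sum_i u i q = 0).

Definition val_ge (u : 'I_n -> ser) (r : rat) : Prop := forall i, nu_ge (u i) r.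

Definition init (u : 'I_n -> ser) (r : rat) : 'cV[C]_n := \col_i u i r.

Definition magic_inv (w : 'I_n -> ser) : 'I_n -> ser :=
  xget (fun _ _ => 0) [set u | in_Fbar u /\ magic_app u = w].

Definition mm (i j : 'I_n) : rat := nu (psub (a i) (a j)).
Definition Amat : 'M[rat]_n :=
  \matrix_(i, j) if i == j then \sum_(k | k != i) mm i k else - mm i j.

Definition in_F (W : 'cV[C]_n) : Prop := \sum_i W i 0 = 0.

Definition AFinv (W : 'cV[C]_n) : 'cV[C]_n :=
  xget 0 [set V | in_F V /\ map_mx ratr Amat *m V = W].

End Puiseux.

(* Every Puiseux series in play lives on a grid b + (1/D)N, so coefficients can be
   computed by recursion on N.  The entries of the magic matrix are
   (a_i' - a_j')/(a_i - a_j) = m_ij x^-1 + (higher powers), so on a common grid it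
   reads as a series sum_k M_k x^(k/D - 1) of complex matrices with leading term
   M_0 = A, all of them mapping into F because the magic matrix has zero column sums.
   A is the Laplacian of the complete graph with the positive symmetric weights m_ij:
   by the maximum principle its kernel is the constants, so A + J is invertible and
   A restricts to an automorphism of F.  Hence the magic matrix applied to u equals w
   can be solved on F one coefficient at a time: the coefficient of u at exponent
   r + 1 is A_F^-1 of the coefficient of w at r minus what the lower coefficients of
   u already produce. *)

From Pilot Require Import Defs.
From mathcomp Require Import all_boot all_order all_algebra.
From mathcomp Require Import complex.
From mathcomp Require Import all_classical all_reals.
From mathcomp Require Import ring lra.
Set Implicit Arguments. Unset Strict Implicit. Unset Printing Implicit Defensive.
Import Order.TTheory GRing.Theory Num.Theory.
Local Open Scope ring_scope.

Section Grid.
Variable R : realType.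
Implicit Types (f g h : ser R) (b c : rat).

Definition grid b (D k : nat) : rat := b + k%:R / D%:R.

Definition on_grid (D : nat) b f := forall q, f q != 0 -> exists k, q = grid b D k.

Lemma pnatr_neq0 (D : nat) : (0 < D)%N -> (D%:R : rat) != 0.
Proof. by rewrite pnatr_eq0 -lt0n. Qed.

Lemma grid0 b D : grid b D 0 = b.
Proof. by rewrite /grid mul0r addr0. Qed.

Lemma gridD b D k j : grid (grid b D k) D j = grid b D (k + j).
Proof. by rewrite /grid natrD mulrDl addrA. Qed.

Lemma ler_grid b D k k' : (0 < D)%N -> (grid b D k <= grid b D k') = (k <= k')%N.
Proof. by move=> D0; rewrite /grid lerD2l ler_pM2r ?ler_nat // invr_gt0 ltr0n. Qed.

Lemma ltr_grid b D k k' : (0 < D)%N -> (grid b D k < grid b D k') = (k < k')%N.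
Proof. by move=> D0; rewrite /grid ltrD2l ltr_pM2r ?ltr_nat // invr_gt0 ltr0n. Qed.

Lemma grid_inj b D : (0 < D)%N -> injective (grid b D).
Proof. by move=> D0 k k' /eqP; rewrite eq_le !ler_grid // -eqn_leq => /eqP. Qed.

Lemma on_grid_eq0 D b f q : on_grid D b f -> (forall k, q <> grid b D k) -> f q = 0.
Proof. by move=> fD qD; apply/eqP/negP => /negP /fD [k /qD]. Qed.

Lemma on_grid_zero D b f :
  on_grid D b f -> (forall k, f (grid b D k) = 0) -> forall q, f q = 0.
Proof.
move=> fD f0 q.
have [[k ->]|qD] := pselect (exists k, q = grid b D k); first exact: f0.
by apply: (on_grid_eq0 fD) => k qk; apply: qD; exists k.
Qed.

Lemma on_grid_sum (I : finType) (P : pred I) D b (F : I -> ser R) :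
  (forall i, P i -> on_grid D b (F i)) -> on_grid D b (fun q => \sum_(i | P i) F i q).
Proof.
move=> FD q; apply: contra_neqP => qD; apply: big1 => i Pi; apply/eqP.
by apply: contra_notT qD => /(FD i Pi).
Qed.

Lemma on_grid_sub D b f g : on_grid D b f -> on_grid D b g -> on_grid D b (psub f g).
Proof.
move=> fD gD q; rewrite /psub; have [/fD //|/negPn/eqP ->] := boolP (f q != 0).
by rewrite sub0r oppr_eq0 => /gD.
Qed.

Lemma on_grid_opp D b f : on_grid D b f -> on_grid D b (fun q => - f q).
Proof. by move=> fD q; rewrite oppr_eq0 => /fD. Qed.

Lemma on_grid_ext D b f g : on_grid D b f -> on_grid D b g ->
  (forall k, f (grid b D k) = g (grid b D k)) -> f = g.
Proof.
move=> fD gD fg; apply/funext => q; apply/eqP; rewrite -subr_eq0; apply/eqP.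
have -> : f q - g q = psub f g q by [].
by apply: (on_grid_zero (on_grid_sub fD gD)) => k; rewrite /psub fg subrr.
Qed.

Lemma on_grid_refine D E b f : (0 < D)%N -> (0 < E)%N ->
  on_grid D b f -> on_grid (D * E) b f.
Proof.
move=> D0 E0 fD q /fD [k ->]; exists (k * E)%N; rewrite /grid !natrM.
by field; rewrite !pnatr_neq0.
Qed.

Lemma on_grid_shift D b f j : (0 < D)%N -> on_grid D b f -> on_grid D (b - j%:R / D%:R) f.
Proof.
move=> D0 fD q /fD [k ->]; exists (k + j)%N; rewrite /grid natrD.
by field; apply: pnatr_neq0.
Qed.

Lemma on_grid_ler_int D (m m' : int) f : (0 < D)%N -> m' <= m ->
  on_grid D m%:~R f -> on_grid D m'%:~R f.
Proof.
move=> D0 m'm fD; set j := `|m - m'|%N.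
have -> : m' = m - j%:Z by rewrite /j gez0_abs ?subr_ge0 //; ring.
have := on_grid_shift (j * D)%N D0 fD.
by rewrite natrM mulfK ?pnatr_neq0 // rmorphB.
Qed.

Lemma puiseux_on_grid f : is_puiseux f -> exists D (m : int), (0 < D)%N /\ on_grid D m%:~R f.
Proof.
move=> [D [m [D0 fD]]]; exists D, m; split => // q /fD [/intrP [z qz] mq].
have : m * D%:Z <= z.
  by rewrite -(ler_int rat) -qz rmorphM /= ler_pM2r ?ltr0n.
rewrite -subr_ge0 => /gez0_abs zm; exists `|(z - m * D%:Z)%R|%N.
rewrite /grid pmulrn zm rmorphB rmorphM /= -qz.
by field; apply: pnatr_neq0.
Qed.

Lemma on_grid_puiseux D (m : int) f : (0 < D)%N -> on_grid D m%:~R f -> is_puiseux f.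
Proof.
move=> D0 fD; exists D, m; split => // q /fD [k ->]; split.
  rewrite /grid mulrDl divfK ?pnatr_neq0 //.
  by rewrite rpredD ?rpredM ?intr_int ?natr_int.
by rewrite /grid lerDl divr_ge0.
Qed.

Lemma puiseux_common_grid (I : finType) (F : I -> ser R) :
  (forall i, is_puiseux (F i)) ->
  exists D (m : int), (0 < D)%N /\ forall i, on_grid D m%:~R (F i).
Proof.
move=> FP; have /fin_all_exists [Df HD] : forall i, exists D, exists m : int,
   (0 < D)%N /\ on_grid D m%:~R (F i) by move=> i; apply: puiseux_on_grid.
have /fin_all_exists [mf Hm] := HD.
have Df_gt0 i : (0 < Df i)%N by case: (Hm i).
exists (\prod_i Df i)%N, (- \sum_i `|mf i|%:Z); split; first by rewrite prodn_gt0.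
move=> i; rewrite (bigD1 i) //=; case: (Hm i) => D0 fD.
apply: (on_grid_ler_int (m := mf i)); first by rewrite muln_gt0 D0 prodn_gt0.
  have mf_ge : - (`|mf i|%N%:Z) <= mf i by rewrite abszE lerNnormlW.
  rewrite (bigD1 i) //= opprD; apply: le_trans mf_ge.
  by rewrite gerDl oppr_le0 sumr_ge0.
by apply: on_grid_refine; rewrite ?prodn_gt0.
Qed.

End Grid.

Section CauchyProduct.
Variable R : realType.
Implicit Types (f g h : ser R) (b c : rat).
Variable D : nat.
Hypothesis D_gt0 : (0 < D)%N.

Lemma pmul_truncate b c f g q K : on_grid D b f -> on_grid D c g ->
  (q - b - c) * D%:R < K%:R ->
  pmul f g q = \sum_(k < K) f (grid b D k) * g (q - grid b D k).
Proof.
move=> fD gD qK; rewrite /pmul (fsbigE (map (grid b D) (iota 0 K))) //.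
- rewrite big_map (eq_bigl xpredT) => [|k]; last by rewrite in_setT.
  by rewrite -(@big_mkord _ _ _ K xpredT (fun k => f (grid b D k) * g (q - grid b D k)))
    /index_iota subn0.
- by rewrite map_inj_uniq ?iota_uniq //; apply: grid_inj.
move=> s _ sK; apply/eqP; rewrite mulf_eq0; apply/negPn/negP.
rewrite negb_or => /andP[/fD [k sk] /gD [j qj]]; subst s.
move/negP: sK; apply; apply/mapP; exists k => //; rewrite mem_iota add0n /=.
have : (k%:R : rat) <= (q - b - c) * D%:R.
  have -> : q - b - c = (k + j)%:R / D%:R.
    have -> : q = grid c D j + grid b D k by rewrite -qj; ring.
    by rewrite /grid natrD; field; apply: pnatr_neq0.
  by rewrite divfK ?pnatr_neq0 // ler_nat leq_addr.
by move=> /le_lt_trans /(_ qK); rewrite ltr_nat.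
Qed.

Lemma on_grid_pmul b c f g : on_grid D b f -> on_grid D c g -> on_grid D (b + c) (pmul f g).
Proof.
move=> fD gD q; rewrite (pmul_truncate fD gD (truncnS_gt _)).
apply: contra_neqP => qD; apply: big1 => k _; apply/eqP; rewrite mulf_eq0.
apply/negPn/negP; rewrite negb_or => /andP[_ /gD [j qj]]; apply: qD; exists (k + j)%N.
transitivity (grid b D k + grid c D j); first by rewrite -qj; ring.
by rewrite /grid natrD; field; apply: pnatr_neq0.
Qed.

Lemma pmul_grid b c f g N : on_grid D b f -> on_grid D c g ->
  pmul f g (grid (b + c) D N) = \sum_(k < N.+1) f (grid b D k) * g (grid c D (N - k)).
Proof.
move=> fD gD; rewrite (pmul_truncate (K := N.+1) fD gD); last first.
  rewrite (_ : (grid (b + c) D N - b - c) * D%:R = N%:R) ?ltr_nat //.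
  by rewrite /grid; field; apply: pnatr_neq0.
apply: eq_bigr => k _; have kN : (k <= N)%N by rewrite -ltnS.
by congr (_ * g _); rewrite /grid natrB //; field; apply: pnatr_neq0.
Qed.

Lemma pmul_psubr b c f g h : on_grid D b f -> on_grid D c g -> on_grid D c h ->
  pmul f (psub g h) = psub (pmul f g) (pmul f h).
Proof.
move=> fD gD hD; apply/funext => q; have K := truncnS_gt ((q - b - c) * D%:R).
rewrite /psub (pmul_truncate fD (on_grid_sub gD hD) K).
rewrite (pmul_truncate fD gD K) (pmul_truncate fD hD K) -sumrB.
by apply: eq_bigr => k _; rewrite mulrBr.
Qed.

Lemma pmulNl b c f g : on_grid D b f -> on_grid D c g ->
  pmul (fun q => - f q) g = fun q => - pmul f g q.
Proof.
move=> fD gD; apply/funext => q; have K := truncnS_gt ((q - b - c) * D%:R).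
rewrite (pmul_truncate (on_grid_opp fD) gD K) (pmul_truncate fD gD K) -sumrN.
by apply: eq_bigr => k _; rewrite mulNr.
Qed.

End CauchyProduct.

Section StrongRecursion.
Variables (X : Type) (x0 : X) (step : nat -> (nat -> X) -> X).

Fixpoint strong_rec_seq N : seq X :=
  if N is N'.+1 then rcons (strong_rec_seq N') (step N' (nth x0 (strong_rec_seq N')))
  else [::].

Definition strong_rec N := nth x0 (strong_rec_seq N.+1) N.

Lemma size_strong_rec_seq N : size (strong_rec_seq N) = N.
Proof. by elim: N => //= N IH; rewrite size_rcons IH. Qed.

Lemma nth_strong_rec_seq N k : (k < N)%N -> nth x0 (strong_rec_seq N) k = strong_rec k.
Proof.
elim: N => // N IH; rewrite ltnS leq_eqVlt => /orP[/eqP -> //|kN].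
by rewrite /= nth_rcons size_strong_rec_seq kN IH.
Qed.

Hypothesis step_local :
  forall N u v, (forall k, (k < N)%N -> u k = v k) -> step N u = step N v.

Lemma strong_recE N : strong_rec N = step N strong_rec.
Proof.
rewrite /strong_rec /= nth_rcons size_strong_rec_seq ltnn eqxx.
by apply: step_local => k; apply: nth_strong_rec_seq.
Qed.

End StrongRecursion.

Section GridSeries.
Variable R : realType.
Implicit Types (f g h : ser R) (b c : rat).
Variable D : nat.
Hypothesis D_gt0 : (0 < D)%N.

Definition grid_series b (coef : nat -> R[i]) : ser R := fun q =>
  if (q - b) * D%:R \is a Num.nat then coef (Num.truncn ((q - b) * D%:R)) else 0.

Lemma on_grid_grid_series b coef : on_grid D b (grid_series b coef).
Proof.
move=> q; rewrite /grid_series; case: ifP => [qD _|]; last by rewrite eqxx.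
exists (Num.truncn ((q - b) * D%:R)); rewrite /grid truncnK //.
by field; apply: pnatr_neq0.
Qed.

Lemma grid_seriesE b coef N : grid_series b coef (grid b D N) = coef N.
Proof.
rewrite /grid_series (_ : (grid b D N - b) * D%:R = N%:R) ?natr_nat ?natrK //.
by rewrite /grid; field; apply: pnatr_neq0.
Qed.

Lemma nu_grid b g q0 : on_grid D b g -> g q0 != 0 ->
  g (nu g) != 0 /\ on_grid D (nu g) g.
Proof.
move=> gD /[dup] gq0 /gD [k1 qk1]; subst q0.
have exP : exists k, g (grid b D k) != 0 by exists k1.
case: (ex_minnP exP) => k0 gk0 k0_min.
have g_ge : nu_ge g (grid b D k0).
  move=> q qlt; apply/eqP/negP => /negP /[dup] gq /gD [k qk]; subst q.
  by move: qlt; rewrite ltr_grid // ltnNge k0_min.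
have -> : nu g = grid b D k0.
  apply: xget_unique => [//|r [gr gr_ge]].
  case: (ltgtP r (grid b D k0)) => // rk0; first by move: gr; rewrite g_ge ?eqxx.
  by move: gk0; rewrite gr_ge ?eqxx.
split => // q /[dup] gq /gD [k qk]; subst q; exists (k - k0)%N.
by rewrite gridD subnKC // k0_min.
Qed.

End GridSeries.

Lemma psub_swap (R : realType) (f g : ser R) : psub f g = fun q => - psub g f q.
Proof. by apply/funext => q; rewrite /psub opprB. Qed.

Lemma nu_psubC (R : realType) (f g : ser R) : nu (psub f g) = nu (psub g f).
Proof.
rewrite /nu; congr (xget 0 _); apply/funext => r; apply/propext.
have E q : psub g f q = - psub f g q by rewrite psub_swap.
split=> -[nz ge]; split.
- by rewrite E oppr_eq0.
- by move=> q /ge; rewrite E => ->; rewrite oppr0.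
- by rewrite -oppr_eq0 -E.
- by move=> q /ge /eqP; rewrite E oppr_eq0 => /eqP.
Qed.

Section Division.
Variable R : realType.
Implicit Types (f g h : ser R).
Variables (D : nat) (mu : rat) (g : ser R).
Hypotheses (D_gt0 : (0 < D)%N) (g_grid : on_grid D mu g) (g_lead : g mu != 0).

(* Coefficients of the quotient are found one at a time, by long division. *)
Lemma pmul_solve c f : on_grid D (mu + c) f -> exists2 h, on_grid D c h & pmul g h = f.
Proof.
move=> fD.
pose step N (u : nat -> R[i]) :=
  (f (grid (mu + c) D N) - \sum_(k < N) g (grid mu D k.+1) * u (N - k.+1)%N) / g mu.
have step_local N u v : (forall k, (k < N)%N -> u k = v k) -> step N u = step N v.
  move=> uv; congr ((_ - _) / _); apply: eq_bigr => k _.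
  by rewrite uv // subnSK // leq_subr.
pose h := grid_series D c (strong_rec 0 step).
have hD : on_grid D c h by apply: on_grid_grid_series.
exists h => //; apply: on_grid_ext (on_grid_pmul D_gt0 g_grid hD) fD _ => N.
rewrite pmul_grid // big_ord_recl /h.
under eq_bigr => k _ do rewrite grid_seriesE // lift0.
rewrite grid0 subn0 grid_seriesE // strong_recE //.
by rewrite /step mulrC divfK // subrK.
Qed.

Lemma pmul_eq0 c e : on_grid D c e -> pmul g e = (fun=> 0) -> e = (fun=> 0).
Proof.
move=> eD ge0; apply/funext; apply: (on_grid_zero eD); elim/ltn_ind => N IH.
have /eqP := congr1 (fun F => F (grid (mu + c) D N)) ge0.
rewrite /= pmul_grid //; rewrite big_ord_recl big1 => [|k _].
  by rewrite addr0 grid0 subn0 mulf_eq0 (negbTE g_lead) => /eqP.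
by rewrite lift0 IH ?mulr0 // subnSK // leq_subr.
Qed.

End Division.

Lemma pmul_cancel (R : realType) D mu (g h1 h2 : ser R) : (0 < D)%N ->
  on_grid D mu g -> g mu != 0 -> is_puiseux h1 -> is_puiseux h2 ->
  pmul g h1 = pmul g h2 -> h1 = h2.
Proof.
move=> D_gt0 gD g_lead h1P h2P g12.
have [E [m [E_gt0 hE]]] : exists E (m : int), (0 < E)%N /\
    forall b, on_grid E m%:~R (if b then h1 else h2).
  by apply: puiseux_common_grid => -[].
have DE_gt0 : (0 < D * E)%N by rewrite muln_gt0 D_gt0.
have gDE := on_grid_refine D_gt0 E_gt0 gD.
have hDE b : on_grid (D * E) m%:~R (if b then h1 else h2).
  by rewrite mulnC; apply: on_grid_refine.
have e0 : psub h1 h2 = fun=> 0.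
  apply: (pmul_eq0 DE_gt0 gDE g_lead (on_grid_sub (hDE true) (hDE false))).
  rewrite (pmul_psubr DE_gt0 gDE (hDE true) (hDE false)) g12.
  by apply/funext => q; rewrite /psub subrr.
apply/funext => q; apply/eqP; rewrite -subr_eq0; apply/eqP.
exact: (congr1 (fun F => F q) e0).
Qed.

Lemma pdivE (R : realType) D mu (f g h : ser R) : (0 < D)%N ->
  on_grid D mu g -> g mu != 0 -> is_puiseux h -> pmul g h = f -> Defs.pdiv f g = h.
Proof.
move=> D_gt0 gD g_lead hP gh; apply: xget_unique => [//|h' [h'P gh']].
by apply: (pmul_cancel D_gt0 gD g_lead h'P hP); rewrite gh gh'.
Qed.

Section Laplacian.
Variables (F : realFieldType) (n : nat) (w : 'I_n -> 'I_n -> F).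
Hypothesis w_sym : forall i j, w i j = w j i.
Hypothesis w_gt0 : forall i j, i != j -> 0 < w i j.

Definition laplacian : 'M[F]_n :=
  \matrix_(i, j) if i == j then \sum_(k | k != i) w i k else - w i j.

Lemma laplacian_row_sum i : \sum_j laplacian i j = 0.
Proof.
rewrite (bigD1 i) //= mxE eqxx [X in _ + X](eq_bigr (fun j => - w i j)) ?sumrN ?subrr //.
by move=> j ji; rewrite mxE eq_sym (negbTE ji).
Qed.

Lemma laplacian_sym i j : laplacian i j = laplacian j i.
Proof. by rewrite !mxE eq_sym; case: eqP => [->|_]; rewrite // w_sym. Qed.

Lemma laplacian_col_sum j : \sum_i laplacian i j = 0.
Proof. by under eq_bigr do rewrite laplacian_sym; apply: laplacian_row_sum. Qed.

Lemma laplacian_mulE (v : 'I_n -> F) i :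
  \sum_j laplacian i j * v j = \sum_(j | j != i) w i j * (v i - v j).
Proof.
have -> : \sum_j laplacian i j * v j = \sum_j laplacian i j * (v j - v i).
  under [RHS]eq_bigr do rewrite mulrBr.
  by rewrite sumrB -mulr_suml laplacian_row_sum mul0r subr0.
rewrite (bigD1 i) //= subrr mulr0 add0r; apply: eq_bigr => j ji.
by rewrite mxE eq_sym (negbTE ji); ring.
Qed.

(* Maximum principle: at a maximum of v every term w i j (v i - v j) is nonnegative. *)
Lemma laplacian_ker_const (v : 'I_n -> F) :
  (forall i, \sum_j laplacian i j * v j = 0) -> forall i j, v i = v j.
Proof.
move=> Lv i; pose i0 := [arg max_(k > i) v k]%O.
have v_max j : v j <= v i0 by rewrite /i0; case: arg_maxP => // k _; apply.
suff v_i0 j : v j = v i0 by move=> j; rewrite !v_i0.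
have [-> //|ji0] := eqVneq j i0.
move: (Lv i0); rewrite laplacian_mulE => /eqP; rewrite psumr_eq0 => [/allP|k ki0].
  move=> /(_ j (mem_index_enum j)); rewrite ji0 /= mulf_eq0 subr_eq0.
  by rewrite gt_eqF ?w_gt0 1?eq_sym //= => /eqP.
by rewrite mulr_ge0 ?subr_ge0 // ltW // w_gt0 // eq_sym.
Qed.

Lemma unitmx_laplacian_add_const : (0 < n)%N -> laplacian + const_mx 1 \in unitmx.
Proof.
move=> n_gt0; rewrite unitmxE unitfE; apply/negP => /det0P [v v_neq0 vB0].
set L := laplacian in vB0 *.
have vB j : \sum_i v 0 i * L i j + \sum_i v 0 i = 0.
  transitivity ((v *m (L + const_mx 1)) 0 j); last by rewrite vB0 mxE.
  by rewrite mxE -big_split; apply: eq_bigr => i _; rewrite !mxE mulrDr mulr1.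
have sum_v0 : \sum_i v 0 i = 0.
  have : \sum_j (\sum_i v 0 i * L i j + \sum_i v 0 i) = 0 by apply: big1 => j _; apply: vB.
  rewrite big_split exchange_big /= big1 => [|i _]; last first.
    by rewrite -mulr_sumr laplacian_row_sum mulr0.
  by rewrite add0r sumr_const card_ord => /eqP; rewrite mulrn_eq0 eqn0Ngt n_gt0 => /eqP.
have v_const : forall i j, v 0 i = v 0 j.
  apply: laplacian_ker_const => i; rewrite -[RHS](vB i) sum_v0 addr0.
  by apply: eq_bigr => j _; rewrite laplacian_sym mulrC.
move/eqP: v_neq0; apply; apply/rowP => j; rewrite mxE.
have : \sum_i v 0 i = v 0 j *+ n by rewrite (eq_bigr (fun=> v 0 j)) ?sumr_const ?card_ord.
by rewrite sum_v0 => /esym/eqP; rewrite mulrn_eq0 eqn0Ngt n_gt0 => /eqP.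
Qed.

End Laplacian.

Lemma const1_mulmx (K : pzRingType) n (V : 'cV[K]_n) :
  (const_mx 1 : 'M[K]_n) *m V = const_mx (\sum_i V i 0).
Proof.
by apply/matrixP => i k; rewrite !mxE (ord1 k); apply: eq_bigr => j _; rewrite mxE mul1r.
Qed.

Section LaplacianZeroSum.
Variables (K : numFieldType) (n : nat) (w : 'I_n -> 'I_n -> rat).
Hypothesis w_sym : forall i j, w i j = w j i.
Hypothesis w_gt0 : forall i j, i != j -> 0 < w i j.
Hypothesis n_gt0 : (0 < n)%N.
Local Notation L := (map_mx (ratr : rat -> K) (laplacian w)).

Lemma unitmx_map_laplacian_add_const : L + const_mx 1 \in unitmx.
Proof.
have -> : L + const_mx 1 = map_mx ratr (laplacian w + const_mx 1).
  by apply/matrixP => i j; rewrite !mxE rmorphD rmorph1.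
by rewrite map_unitmx unitmx_laplacian_add_const.
Qed.

Lemma sum_laplacian_mulmx (V : 'cV[K]_n) : \sum_i (L *m V) i 0 = 0.
Proof.
under eq_bigr do rewrite mxE.
rewrite exchange_big big1 // => j _; rewrite -mulr_suml.
under eq_bigr do rewrite mxE.
by rewrite -rmorph_sum laplacian_col_sum // rmorph0 mul0r.
Qed.

Lemma sum_laplacian_add_const_mulmx (V : 'cV[K]_n) :
  \sum_i ((L + const_mx 1) *m V) i 0 = (\sum_i V i 0) *+ n.
Proof.
rewrite mulmxDl const1_mulmx (eq_bigr (fun i => (L *m V) i 0 + \sum_j V j 0)).
  by rewrite big_split /= sum_laplacian_mulmx sumr_const card_ord add0r.
by move=> i _; rewrite [LHS]mxE [const_mx _ _ _]mxE.
Qed.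

Lemma laplacian_zero_sum_inj (V : 'cV[K]_n) : \sum_i V i 0 = 0 -> L *m V = 0 -> V = 0.
Proof.
move=> V0 LV0; have B_unit := unitmx_map_laplacian_add_const.
rewrite -[V]mul1mx -(mulVmx B_unit) -mulmxA mulmxDl LV0 const1_mulmx V0 add0r.
exact: mulmx0.
Qed.

Lemma laplacian_zero_sum_surj (W : 'cV[K]_n) :
  \sum_i W i 0 = 0 -> exists2 V : 'cV[K]_n, \sum_i V i 0 = 0 & L *m V = W.
Proof.
move=> W0; have B_unit := unitmx_map_laplacian_add_const.
set V := invmx (L + const_mx 1) *m W.
have BV : (L + const_mx 1) *m V = W by rewrite mulmxA mulmxV // mul1mx.
have V0 : \sum_i V i 0 = 0.
  have := sum_laplacian_add_const_mulmx V; rewrite BV W0 => /esym/eqP.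
  by rewrite mulrn_eq0 eqn0Ngt n_gt0 => /eqP.
by exists V => //; rewrite -BV mulmxDl const1_mulmx V0 addr0.
Qed.

End LaplacianZeroSum.

Lemma in_F_sum (R : realType) n (I : finType) (V : I -> 'cV[R[i]]_n) :
  (forall k, in_F (V k)) -> in_F (\sum_k V k).
Proof.
move=> VF; rewrite /in_F; under eq_bigr do rewrite summxE.
by rewrite exchange_big big1 // => k _; apply: VF.
Qed.

Lemma in_F_sub (R : realType) n (V W : 'cV[R[i]]_n) : in_F V -> in_F W -> in_F (V - W).
Proof.
move=> VF WF; rewrite /in_F; under eq_bigr do rewrite !mxE.
by rewrite sumrB VF WF subrr.
Qed.

Lemma in_F_init (R : realType) n (u : 'I_n -> ser R) r :
  (forall q, \sum_i u i q = 0) -> in_F (init u r).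
Proof. by move=> u0; rewrite /in_F; under eq_bigr do rewrite mxE. Qed.

Section SeriesOperator.
Variables (R : realType) (n : nat) (M : 'I_n -> 'I_n -> ser R).
Local Notation C := R[i].

Definition ser_app (u : 'I_n -> ser R) : 'I_n -> ser R :=
  fun i q => \sum_j pmul (M i j) (u j) q.

Hypothesis M_colsum : forall j q, \sum_i M i j q = 0.

Variables (L : 'M[C]_n) (Linv : 'cV[C]_n -> 'cV[C]_n).
Hypothesis M_lead : forall i j, M i j (-1) = L i j.
Hypothesis L_inj : forall V, in_F V -> L *m V = 0 -> V = 0.
Hypothesis LinvP : forall W, in_F W -> in_F (Linv W) /\ L *m Linv W = W.

Lemma Linv0 : Linv 0 = 0.
Proof.
have F0 : in_F (0 : 'cV[C]_n) by rewrite /in_F big1 // => i _; rewrite mxE.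
by have [LinvF LLinv] := LinvP F0; apply: L_inj LinvF LLinv.
Qed.

Section Coefficients.
Variable D : nat.
Hypothesis D_gt0 : (0 < D)%N.
Hypothesis M_grid : forall i j, on_grid D (-1) (M i j).

Definition coef_mx k : 'M[C]_n := \matrix_(i, j) M i j (grid (-1) D k).

Lemma in_F_coef_mx_mul k (V : 'cV[C]_n) : in_F (coef_mx k *m V).
Proof.
rewrite /in_F; under eq_bigr do rewrite mxE.
rewrite exchange_big big1 // => j _; rewrite -mulr_suml.
by under eq_bigr do rewrite mxE; rewrite M_colsum mul0r.
Qed.

Lemma init_ser_app_grid (u : 'I_n -> ser R) b N : (forall j, on_grid D b (u j)) ->
  init (ser_app u) (grid (-1 + b) D N) =
  \sum_(k < N.+1) coef_mx k *m init u (grid b D (N - k)).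
Proof.
move=> u_grid; apply/matrixP => i z; rewrite (ord1 z) !mxE summxE /ser_app.
under eq_bigr do rewrite pmul_grid //.
rewrite exchange_big; apply: eq_bigr => k _; rewrite mxE.
by apply: eq_bigr => j _; rewrite !mxE.
Qed.

Lemma on_grid_ser_app (u : 'I_n -> ser R) b i : (forall j, on_grid D b (u j)) ->
  on_grid D (-1 + b) (ser_app u i).
Proof. by move=> u_grid; apply: on_grid_sum => j _; apply: on_grid_pmul. Qed.

Lemma ser_app_psub (u1 u2 : 'I_n -> ser R) b i :
  (forall j, on_grid D b (u1 j)) -> (forall j, on_grid D b (u2 j)) ->
  ser_app (fun j => psub (u1 j) (u2 j)) i = psub (ser_app u1 i) (ser_app u2 i).
Proof.
move=> u1_grid u2_grid; apply/funext => q; rewrite /ser_app /psub -sumrB.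
by apply: eq_bigr => j _; rewrite (pmul_psubr D_gt0 (@M_grid i j) (u1_grid j) (u2_grid j)).
Qed.

Lemma ser_app_sum0 (u : 'I_n -> ser R) b : (forall j, on_grid D b (u j)) ->
  forall q, \sum_i ser_app u i q = 0.
Proof.
move=> u_grid; apply: (on_grid_zero (b := -1 + b) (D := D)) => [|N].
  by apply: on_grid_sum => i _; apply: on_grid_ser_app.
have := in_F_sum (fun k : 'I_N.+1 => in_F_coef_mx_mul k (init u (grid b D (N - k)))).
by rewrite -init_ser_app_grid // /in_F; under eq_bigr do rewrite mxE.
Qed.

Lemma coef_mx0 : coef_mx 0 = L.
Proof. by apply/matrixP => i j; rewrite mxE grid0 M_lead. Qed.

(* Once the lower coefficients of [u] vanish, the next one is killed by [L]. *)
Lemma ser_app_eq0 (u : 'I_n -> ser R) b : (forall j, on_grid D b (u j)) ->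
  (forall q, \sum_i u i q = 0) -> ser_app u = (fun _ _ => 0) -> u = (fun _ _ => 0).
Proof.
move=> u_grid u0 Mu0.
suff init0 N : init u (grid b D N) = 0.
  apply/funext => j; apply/funext; apply: (on_grid_zero (u_grid j)) => N.
  by have /matrixP /(_ j 0) := init0 N; rewrite !mxE.
elim/ltn_ind: N => N IH; apply: L_inj; first exact: in_F_init.
have := init_ser_app_grid N u_grid.
rewrite Mu0 big_ord_recl subn0 coef_mx0 big1 => [|k _]; last first.
  by rewrite IH ?mulmx0 // subnSK // leq_subr.
by rewrite addr0 => <-; apply/matrixP => i z; rewrite !mxE.
Qed.

Section GradedInverse.
Variables (b : rat) (w : 'I_n -> ser R).
Hypothesis w_grid : forall i, on_grid D b (w i).
Hypothesis w_sum0 : forall q, \sum_i w i q = 0.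

(* Solve [ser_app u = w] degree by degree: the coefficient of [u] at
   [grid (b + 1) D N] is [Linv] of what the earlier ones leave over. *)
Definition inv_step N (U : nat -> 'cV[C]_n) :=
  Linv (init w (grid b D N) - \sum_(k < N) coef_mx k.+1 *m U (N - k.+1)%N).

Definition inv_coef := strong_rec 0 inv_step.

Definition inv_ser : 'I_n -> ser R :=
  fun j => grid_series D (b + 1) (fun N => inv_coef N j 0).

Lemma inv_coefE N : inv_coef N = inv_step N inv_coef.
Proof.
apply: strong_recE => {}N U V UV; congr (Linv (_ - _)); apply: eq_bigr => k _.
by rewrite UV // subnSK // leq_subr.
Qed.

Lemma inv_coefP N : in_F (inv_coef N) /\
  L *m inv_coef N = init w (grid b D N) - \sum_(k < N) coef_mx k.+1 *m inv_coef (N - k.+1)%N.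
Proof.
rewrite inv_coefE; apply: LinvP; apply: in_F_sub; first exact: in_F_init.
by apply: in_F_sum => k; apply: in_F_coef_mx_mul.
Qed.

Lemma inv_ser_grid j : on_grid D (b + 1) (inv_ser j).
Proof. exact: on_grid_grid_series. Qed.

Lemma init_inv_ser N : init inv_ser (grid (b + 1) D N) = inv_coef N.
Proof. by apply/matrixP => i z; rewrite (ord1 z) !mxE /inv_ser grid_seriesE. Qed.

Lemma ser_app_inv_ser : ser_app inv_ser = w.
Proof.
have b1 : -1 + (b + 1) = b by ring.
apply/funext => i; apply: on_grid_ext _ (@w_grid i) _ => [|N].
  by rewrite -[in X in on_grid _ X]b1; apply: on_grid_ser_app => j; apply: inv_ser_grid.
have := init_ser_app_grid N inv_ser_grid; rewrite b1 => /matrixP /(_ i 0).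
rewrite !mxE => ->; rewrite big_ord_recl subn0 init_inv_ser coef_mx0 (proj2 (inv_coefP N)).
rewrite [X in _ + X](eq_bigr (fun k : 'I_N => coef_mx k.+1 *m inv_coef (N - k.+1)%N)).
  by rewrite subrK mxE.
by move=> k _; rewrite lift0 init_inv_ser.
Qed.

Lemma inv_ser_sum0 q : \sum_i inv_ser i q = 0.
Proof.
have sum_grid : on_grid D (b + 1) (fun q => \sum_i inv_ser i q).
  by apply: on_grid_sum => i _; apply: inv_ser_grid.
apply: (on_grid_zero sum_grid) => N.
have := (inv_coefP N).1; rewrite -init_inv_ser /in_F.
by under eq_bigr do rewrite mxE.
Qed.

Lemma inv_coef_eq0 r N : val_ge w r -> grid (b + 1) D N < r + 1 -> inv_coef N = 0.
Proof.
move=> w_ge; elim/ltn_ind: N => N IH Nr; rewrite inv_coefE /inv_step big1 => [|k _].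
  rewrite subr0 (_ : init w _ = 0) ?Linv0 //.
  by apply/matrixP => i z; rewrite !mxE w_ge //; move: Nr; rewrite /grid; lra.
rewrite IH ?mulmx0 ?subnSK ?leq_subr //; apply: le_lt_trans Nr.
by rewrite ler_grid // leq_subr.
Qed.

Lemma val_ge_inv_ser r : val_ge w r -> val_ge inv_ser (r + 1).
Proof.
move=> w_ge j q qr; have [[N qN]|q_off] := pselect (exists N, q = grid (b + 1) D N).
  by subst q; rewrite /inv_ser grid_seriesE // (inv_coef_eq0 w_ge qr) mxE.
by apply: (on_grid_eq0 (@inv_ser_grid j)) => N qN; apply: q_off; exists N.
Qed.

Lemma init_inv_ser_val r : val_ge w r -> init inv_ser (r + 1) = Linv (init w r).
Proof.
move=> w_ge; have [[N rN]|r_off] := pselect (exists N, r + 1 = grid (b + 1) D N).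
  rewrite rN init_inv_ser inv_coefE /inv_step big1 => [|k _].
    by rewrite subr0; congr (Linv (init w _)); move: rN; rewrite /grid; lra.
  rewrite (inv_coef_eq0 (r := r)) ?mulmx0 // rN ltr_grid // ltn_subrL /=.
  exact: leq_ltn_trans (leq0n k) (ltn_ord k).
have -> : init w r = 0.
  apply/matrixP => i z; rewrite !mxE; apply: (on_grid_eq0 (@w_grid i)) => N rN.
  by apply: r_off; exists N; rewrite rN /grid; ring.
rewrite Linv0; apply/matrixP => i z; rewrite !mxE.
by apply: (on_grid_eq0 (@inv_ser_grid i)) => N rN; apply: r_off; exists N.
Qed.

End GradedInverse.
End Coefficients.

Hypothesis M_grid : exists2 D, (0 < D)%N & forall i j, on_grid D (-1) (M i j).

Lemma ser_app_common_grid (I : finType) (u : I -> ser R) : (forall j, is_puiseux (u j)) ->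
  exists D (m : int),
    [/\ (0 < D)%N, forall i j, on_grid D (-1) (M i j) & forall j, on_grid D m%:~R (u j)].
Proof.
move=> uP; have [D D_gt0 MD] := M_grid; have [E [m [E_gt0 uE]]] := puiseux_common_grid uP.
exists (D * E)%N, m; split => [|i j|j]; first by rewrite muln_gt0 D_gt0.
  exact: on_grid_refine.
by rewrite mulnC; apply: on_grid_refine.
Qed.

Lemma ser_app_Fbar u : in_Fbar u -> in_Fbar (ser_app u).
Proof.
case=> uP _; have [D [m [D_gt0 MD uD]]] := ser_app_common_grid uP.
split=> [i|]; last exact: (ser_app_sum0 D_gt0 MD uD).
apply: (on_grid_puiseux (m := -1 + m) D_gt0).
by rewrite rmorphD rmorphN1; apply: (on_grid_ser_app D_gt0 MD).
Qed.

Lemma ser_app_inj u1 u2 : in_Fbar u1 -> in_Fbar u2 -> ser_app u1 = ser_app u2 -> u1 = u2.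
Proof.
move=> [u1P u1_sum0] [u2P u2_sum0] u12.
pose u p := if p.1 then u1 p.2 else u2 p.2 : ser R.
have [D [m [D_gt0 MD uD]]] : exists D (m : int), [/\ (0 < D)%N,
    forall i j, on_grid D (-1) (M i j) & forall p, on_grid D m%:~R (u p)].
  by apply: ser_app_common_grid => -[[] j]; [apply: u1P | apply: u2P].
have e0 : (fun j => psub (u1 j) (u2 j)) = fun _ _ => 0.
  apply: (ser_app_eq0 D_gt0 MD (b := m%:~R)) => [j|q|].
  - exact: on_grid_sub (uD (true, j)) (uD (false, j)).
  - by rewrite /psub sumrB u1_sum0 u2_sum0 subrr.
  apply/funext => i.
  rewrite (ser_app_psub D_gt0 MD i (fun j => uD (true, j)) (fun j => uD (false, j))) u12.
  by apply/funext => q; rewrite /psub subrr.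
apply/funext => j; apply/funext => q; apply/eqP; rewrite -subr_eq0; apply/eqP.
exact: (congr1 (fun v => v j q) e0).
Qed.

Lemma ser_app_graded_inverse w : in_Fbar w -> exists u, [/\ in_Fbar u, ser_app u = w &
  forall r, val_ge w r -> val_ge u (r + 1) /\ init u (r + 1) = Linv (init w r)].
Proof.
case=> wP w_sum0; have [D [m [D_gt0 MD wD]]] := ser_app_common_grid wP.
exists (inv_ser D m%:~R w); split.
- split=> [j|]; last exact: inv_ser_sum0.
  apply: (on_grid_puiseux (m := m + 1) D_gt0).
  by rewrite rmorphD /=; apply: inv_ser_grid.
- exact: ser_app_inv_ser.
- by move=> r w_ge; split; [apply: val_ge_inv_ser | apply: init_inv_ser_val].
Qed.

End SeriesOperator.

Lemma pder_grid (R : realType) D mu (f : ser R) :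
  on_grid D mu f -> on_grid D (mu - 1) (pder f).
Proof.
move=> fD q; rewrite /pder mulf_eq0 negb_or => /andP[_ /fD [k qk]].
by exists k; apply: (addIr 1); rewrite qk /grid; ring.
Qed.

Lemma pder_psub (R : realType) (f g : ser R) : psub (pder f) (pder g) = pder (psub f g).
Proof. by apply/funext => q; rewrite /psub /pder mulrBr. Qed.

Section MagicMatrix.
Variables (R : realType) (n : nat) (a : 'I_n -> ser R).
Hypothesis a_inj : injective a.
Hypothesis a_gt0 : forall i, nu_gt (a i) 0.
Variables (D : nat) (m : int).
Hypothesis D_gt0 : (0 < D)%N.
Hypothesis a_grid : forall i, on_grid D m%:~R (a i).

Lemma mm_sym i j : mm a i j = mm a j i.
Proof. exact: nu_psubC. Qed.

Lemma psub_lead i j : i != j ->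
  [/\ psub (a i) (a j) (mm a i j) != 0, on_grid D (mm a i j) (psub (a i) (a j))
    & 0 < mm a i j].
Proof.
move=> ij; have [q aq] : exists q, psub (a i) (a j) q != 0.
  apply: contra_notP (negP ij) => a0; apply/eqP/a_inj/funext => q.
  by apply/eqP; rewrite -subr_eq0; apply/negPn/negP => aq; apply: a0; exists q.
have [lead lead_grid] := nu_grid D_gt0 (on_grid_sub (@a_grid i) (@a_grid j)) aq.
split => //; rewrite ltNge; apply/negP => mm_le0; move: lead.
by rewrite /psub (@a_gt0 i _ mm_le0) (@a_gt0 j _ mm_le0) subrr eqxx.
Qed.

Lemma mm_gt0 i j : i != j -> 0 < mm a i j.
Proof. by case/psub_lead. Qed.

Lemma magic_off_spec i j : i != j ->
  [/\ on_grid D (-1) (magic_off a i j), magic_off a i j (-1) = ratr (mm a i j) &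
      pmul (psub (a i) (a j)) (magic_off a i j) = psub (pder (a i)) (pder (a j))].
Proof.
move=> ij; have [lead lead_grid _] := psub_lead ij.
set g := psub (a i) (a j) in lead lead_grid *; set mu := mm a i j in lead lead_grid *.
have [h h_grid gh] := pmul_solve D_gt0 lead_grid lead (pder_grid lead_grid).
have -> : magic_off a i j = h.
  rewrite /magic_off pder_psub; apply: (pdivE D_gt0 lead_grid lead _ gh).
  by apply: (on_grid_puiseux (m := -1) D_gt0).
rewrite pder_psub; split => //.
have := congr1 (fun F => F (grid (mu - 1) D 0)) gh.
rewrite /= pmul_grid // big_ord1 !grid0 /pder (_ : mu - 1 + 1 = mu); last by ring.
by move/(congr1 (fun x => x / g mu)); rewrite [g mu * _]mulrC !mulfK.
Qed.

Lemma magic_offC i j : i != j -> magic_off a i j = magic_off a j i.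
Proof.
move=> ij; have ji : j != i by rewrite eq_sym.
have [h_grid _ gh] := magic_off_spec ij.
have [_ g_grid _] := psub_lead ij; have [lead' g'_grid _] := psub_lead ji.
symmetry; apply: (pdivE D_gt0 g'_grid lead').
  exact: (on_grid_puiseux (m := -1) D_gt0 h_grid).
by rewrite psub_swap (pmulNl D_gt0 g_grid h_grid) gh -psub_swap.
Qed.

Local Notation A := (map_mx (ratr : rat -> R[i]) (Amat a)).

Lemma magic_grid i j : on_grid D (-1) (magic a i j).
Proof.
rewrite /magic; case: eqVneq => [_|ij]; last by apply/on_grid_opp; case: (magic_off_spec ij).
by apply: on_grid_sum => k; rewrite eq_sym => ik; case: (magic_off_spec ik).
Qed.

Lemma magic_lead i j : magic a i j (-1) = A i j.
Proof.
rewrite /magic !mxE; case: eqVneq => [_|ij].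
  by rewrite rmorph_sum; apply: eq_bigr => k; rewrite eq_sym => ik; case: (magic_off_spec ik).
by case: (magic_off_spec ij) => _ -> _; rewrite rmorphN.
Qed.

Lemma magic_colsum j q : \sum_i magic a i j q = 0.
Proof.
rewrite (bigD1 j) //= {1}/magic eqxx [X in _ + X](eq_bigr (fun i => - magic_off a j i q)).
  by rewrite sumrN subrr.
by move=> i ij; rewrite /magic (negbTE ij) magic_offC.
Qed.

Hypothesis n_gt0 : (0 < n)%N.

Lemma Amat_F_inj V : in_F V -> A *m V = 0 -> V = 0.
Proof. exact: (laplacian_zero_sum_inj mm_sym mm_gt0 n_gt0). Qed.

Lemma AFinvP W : in_F W -> in_F (AFinv a W) /\ A *m AFinv a W = W.
Proof.
move=> /(laplacian_zero_sum_surj mm_sym mm_gt0 n_gt0) [V VF AV].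
by apply: (xgetPex 0 (P := [set V | in_F V /\ A *m V = W])); exists V.
Qed.

End MagicMatrix.

Theorem mainTheorem10 (R : realType) (n : nat) (a : 'I_n -> ser R) :
  (2 <= n)%N ->
  (forall i, is_puiseux (a i)) ->
  injective a ->
  (forall i, nu_gt (a i) 0) ->
  [/\ (forall W : 'cV[R[i]]_n, in_F W -> in_F (map_mx ratr (Amat a) *m W)) /\
      (forall W : 'cV[R[i]]_n, in_F W -> exists! V, in_F V /\ map_mx ratr (Amat a) *m V = W),
      (forall u, in_Fbar u -> in_Fbar (magic_app a u)),
      (forall w, in_Fbar w -> exists! u, in_Fbar u /\ magic_app a u = w) &
      (forall (r : rat) (w : 'I_n -> ser R), in_Fbar w -> val_ge w r ->
         [/\ in_Fbar (magic_inv a w),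
             val_ge (magic_inv a w) (r + 1) &
             init (magic_inv a w) (r + 1) = AFinv a (init w r)])].
Proof.
move=> n_ge2 aP a_inj a_gt0; have n_gt0 : (0 < n)%N := ltnW n_ge2.
have [D [m [D_gt0 aD]]] := puiseux_common_grid aP.
have A_inj := Amat_F_inj a_inj a_gt0 D_gt0 aD n_gt0.
have Ainv := AFinvP a_inj a_gt0 D_gt0 aD n_gt0.
have M_grid : exists2 D, (0 < D)%N & forall i j, on_grid D (-1) (magic a i j).
  by exists D => // i j; apply: (magic_grid a_inj a_gt0 D_gt0 aD).
have colsum := magic_colsum a_inj a_gt0 D_gt0 aD.
have lead := magic_lead a_inj a_gt0 D_gt0 aD.
have app_inj := ser_app_inj lead A_inj M_grid.
have inv := ser_app_graded_inverse colsum lead A_inj Ainv M_grid.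
split.
- split=> [W _|W WF]; first exact: (sum_laplacian_mulmx (mm_sym a)).
  have [AF AW] := Ainv W WF; exists (AFinv a W); split=> // V [VF AV].
  apply/eqP; rewrite eq_sym -subr_eq0; apply/eqP/A_inj; first exact: in_F_sub.
  by rewrite mulmxBr AV AW subrr.
- exact: (ser_app_Fbar colsum M_grid).
- move=> w /inv [u [uF uw _]]; exists u; split=> // u' [u'F u'w].
  by apply: app_inj; rewrite ?uw.
move=> r w /inv [u [uF uw u_graded]] w_ge.
have -> : magic_inv a w = u.
  by apply: xget_unique => // u' [u'F u'w]; apply: app_inj; rewrite ?uw.
by have [] := u_graded r w_ge.
Qed.
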